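(* Let $\nu,\sigma>0$ and $V\in W^{2,\infty}_{loc}(\mathbb{R})$ with $\lim_{|x|\to\infty}V(x)=\infty$. Let $f_0\in L^1(\mathbb{R}^2)$, $f_0\ge0$, $\int_{\mathbb{R}^2}f_0\,dx\,dv=1$, and let $f$ be the solution of the kinetic Fokker–Planck equation $\partial_tf+v\,\partial_xf-V'(x)\,\partial_vf=\nu\,\partial_v(vf)+\sigma\,\partial_v^2f$, $x,v\in\mathbb{R}$, $t>0$, with $f(0)=f_0$. Then $f(t,x,v)>0$ for all $t>0$ and all $x,v\in\mathbb{R}$.
   Context: ''The solution'' refers to the (well-posed, mass-conserving, instantaneously smooth) solution of this equation. *)

From HB Require Import structures.
From mathcomp Require Import all_boot all_order all_algebra.
From mathcomp Require Import all_classical all_reals all_analysis.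
Set Implicit Arguments. Unset Strict Implicit. Unset Printing Implicit Defensive.
Import Order.TTheory GRing.Theory Num.Theory.
Import numFieldNormedType.Exports.
Local Open Scope classical_set_scope.
Local Open Scope ring_scope.

Definition leb2 (R : realType) :=
  ((@lebesgue_measure R) \x (@lebesgue_measure R))%E.

(* V in W^{2,oo}_loc(R): V is differentiable and V' is locally Lipschitz
   (W^{1,oo}_loc = locally Lipschitz, via the continuous representative). *)
Definition W2inf_loc (R : realType) (V : R -> R) : Prop :=
  (forall x, derivable V x 1) /\
  (forall a b : R, exists L : R, forall x y, a <= x <= b -> a <= y <= b ->
      `|derive1 V x - derive1 V y| <= L * `|x - y|).

Definition dt (R : realType) (f : R -> R -> R -> R) t x v := derive1 (fun s => f s x v) t.
Definition dx (R : realType) (f : R -> R -> R -> R) t x v := derive1 (fun y => f t y v) x.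
Definition dv (R : realType) (f : R -> R -> R -> R) t x v := derive1 (fun w => f t x w) v.
Definition dvv (R : realType) (f : R -> R -> R -> R) t x v :=
  derive1 (fun w => dv f t x w) v.
Definition dv_vf (R : realType) (f : R -> R -> R -> R) t x v :=
  derive1 (fun w => w * f t x w) v.

Definition cont_pos (R : realType) (g : R -> R -> R -> R) : Prop :=
  forall t x v : R, 0 < t ->
    {for ((t, x), v), continuous (fun p : R * R * R => g p.1.1 p.1.2 p.2)}.

(* Classical (instantaneously smooth), nonnegative, mass-conserving solution
   on t > 0 of
     d_t f + v d_x f - V'(x) d_v f = nu d_v (v f) + sigma d_v^2 f,
   with f(t) -> f0 in L^1(R^2) as t -> 0+. *)
Definition kfp_solution (R : realType) (nu sigma : R) (V : R -> R)
    (f0 : R * R -> R) (f : R -> R -> R -> R) : Prop :=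
      (forall t x v, 0 < t ->
         [/\ derivable (fun s => f s x v) t 1,
             derivable (fun y => f t y v) x 1,
             derivable (fun w => f t x w) v 1 &
             derivable (fun w => dv f t x w) v 1]) /\
      cont_pos f /\ cont_pos (dt f) /\ cont_pos (dx f) /\ cont_pos (dv f)
        /\ cont_pos (dvv f) /\
      (forall t x v, 0 < t ->
         dt f t x v + v * dx f t x v - derive1 V x * dv f t x v
         = nu * dv_vf f t x v + sigma * dvv f t x v) /\
      (forall t x v, 0 < t -> 0 <= f t x v) /\
      (forall t, 0 < t ->
         (@leb2 R).-integrable setT (fun z : R * R => (f t z.1 z.2)%:E) /\
         (\int[@leb2 R]_z (f t z.1 z.2)%:E = 1)%E) /\
      ((\int[@leb2 R]_z (`|f t z.1 z.2 - f0 z|)%:E)%E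
         @[t --> (0:R)^'+] --> 0%E).

From HB Require Import structures.
From mathcomp Require Import all_boot all_order all_algebra.
From mathcomp Require Import all_classical all_reals all_analysis.
From mathcomp Require Import ring lra.
Import Order.TTheory GRing.Theory Num.Theory.
Import numFieldNormedType.Exports.
Local Open Scope classical_set_scope.
Local Open Scope ring_scope.

(* At time [s = t/2] mass conservation gives a point where [f(s)] is positive,
   hence a box on which [f(s) > c]. A cubic path [(xi, eta)] with [xi' = eta]
   joins its centre at time [s] to the target point [(x, v)] at time [t].
   Along it we transport the bump [a e^(-K (t - s)) g^3], where
   [g = 1 - alpha u^2 - beta w^2], [w = v - eta] and [u = x - xi - w / (4 sigma beta)];
   the shear [u] lets the transport term [v d_x] make up for the absence of
   diffusion in [x]. For large [beta] and [K] the bump is a strict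
   subsolution of the equation satisfied by [e^(-nu t) f] wherever [g > 0], so
   the minimum of their difference on a compact box cannot be negative; at the
   target point [g = 1], whence [f(t, x, v) > 0]. *)

Section OneVariableCalculus.
Context {R : realType}.
Implicit Types (g dg : R -> R) (a b c : R).

Lemma derive1_val {g c dc} : is_derive c 1 g dc -> derive1 g c = dc.
Proof. by move=> h; rewrite derive1E derive_val. Qed.

Lemma is_derive_derive1 {g c} : derivable g c 1 -> is_derive c 1 g (derive1 g c).
Proof. by move=> h; rewrite derive1E; exact: derivableP. Qed.

Lemma derivable_bounded_segment g a b : (forall t, derivable g t 1) ->
  exists H, forall t, a <= t <= b -> `|g t| <= H.
Proof.
move=> gd; have [leab|ltba] := leP a b; last first.
  by exists 0 => t /andP[ta tb]; have := le_trans ta tb; rewrite leNgt ltba.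
have gc : {within `[a, b], continuous (fun t => `|g t|)}.
  apply: continuous_subspaceT => t; apply: continuous_comp; last exact: norm_continuous.
  exact/differentiable_continuous/derivable1_diffP/gd.
have [c _ hc] := EVT_max leab gc.
by exists `|g c| => t tab; apply: hc; rewrite in_itv.
Qed.

Lemma difference_quotient_cvg g c : derivable g c 1 ->
  (fun h => h^-1 * (g (h + c) - g c)) @ 0^' --> derive1 g c.
Proof.
move=> gd.
have -> : (fun h => h^-1 * (g (h + c) - g c))
          = (fun h => h^-1 *: ((g \o shift c) (h *: (1:R)) - g c)).
  by apply/funext => h /=; rewrite [h *: 1]mulr1.
by rewrite derive1E; exact: gd.
Qed.

Lemma near0'_ball {P : R -> Prop} {e : R} : 0 < e -> (\forall h \near (0:R)^', P h) ->
  exists2 r : R, 0 < r <= e & forall h, h != 0 -> `|h| < r -> P h.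
Proof.
move=> e0 /nbhs_ballP [r r0 Hr]; exists (Num.min r e).
  by rewrite lt_min r0 e0 ge_min lexx orbT.
move=> h h0; rewrite lt_min => /andP[hr _]; apply: Hr => //.
by rewrite /ball /= sub0r normrN.
Qed.

Lemma derive1_le0_at_left_min {g c} e : derivable g c 1 -> 0 < e ->
  (forall y, c - e < y <= c -> g c <= g y) -> derive1 g c <= 0.
Proof.
move=> gd e0 gmin; rewrite leNgt; apply/negP => d0.
have [r /andP[r0 re] Hr] := near0'_ball e0 (cvgr_gt _ (difference_quotient_cvg _ _ gd) _ d0).
have := Hr (- (r / 2)) ltac:(by rewrite oppr_eq0 gt_eqF ?divr_gt0)
  ltac:(by rewrite normrN gtr0_norm ?divr_gt0 //; lra).
have := gmin (- (r / 2) + c) ltac:(apply/andP; lra).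
have : (- (r / 2))^-1 * (g (- (r / 2) + c) - g c) <= 0 <-> 0 <= g (- (r / 2) + c) - g c.
  by rewrite nmulr_rle0 // invr_lt0 oppr_lt0 divr_gt0.
lra.
Qed.

Lemma derivative_at_min_eq0 {g dg a b c} : a < c < b ->
  (forall y, a < y < b -> is_derive y 1 g (dg y)) ->
  (forall y, a < y < b -> g c <= g y) -> dg c = 0.
Proof.
move=> cab gder gmin; have /gder gc := cab.
rewrite -(derive1_val gc); apply: derive1_val; apply: (derive1_at_min (a := a) (b := b)).
- by case/andP: cab => ? ?; lra.
- by move=> y; rewrite in_itv => /gder [].
- by rewrite in_itv.
- by move=> y; rewrite in_itv => /gmin.
Qed.

Lemma derive1_ge0_at_min {g dg a b c} : a < c < b ->
  (forall y, a < y < b -> is_derive y 1 g (dg y)) -> derivable dg c 1 ->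
  (forall y, a < y < b -> g c <= g y) -> 0 <= derive1 dg c.
Proof.
move=> cab gder ddg gmin; have dgc0 := derivative_at_min_eq0 cab gder gmin.
move: cab => /andP[ac cb]; rewrite leNgt; apply/negP => d0.
have [r /andP[r0 rb] Hr] :=
  near0'_ball (ltac:(lra) : 0 < b - c) (cvgr_lt _ (difference_quotient_cvg _ _ ddg) _ d0).
have dg_neg y : 0 < y < r -> dg (y + c) < 0.
  move=> /andP[y0 yr]; have := Hr y (lt0r_neq0 y0) ltac:(by rewrite gtr0_norm).
  by rewrite dgc0 subr0 pmulr_rlt0 // invr_gt0.
have [z zI gz] := @MVT R g dg c (c + r / 2) ltac:(lra)
  ltac:(by move=> z; rewrite in_itv /= => /andP[z1 z2]; apply: gder; lra)
  ltac:(apply: derivable_within_continuous => z; rewrite in_itv /= => /andP[z1 z2];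
        by case: (gder z ltac:(lra))).
move: zI; rewrite in_itv /= => /andP[z1 z2].
have := dg_neg (z - c) ltac:(apply/andP; lra); rewrite subrK => dz.
have := gmin (c + r / 2) ltac:(apply/andP; lra).
have : dg z * (c + r / 2 - c) < 0 by rewrite pmulr_llt0 //; lra.
lra.
Qed.

End OneVariableCalculus.

Lemma cubic_path {R : realType} {s t0 : R} (xs vs x0 v0 : R) : s < t0 ->
  exists xi eta deta : R -> R,
    [/\ forall t : R, is_derive t 1 xi (eta t), forall t : R, is_derive t 1 eta (deta t),
        forall t : R, derivable deta t 1, xi s = xs /\ eta s = vs & xi t0 = x0 /\ eta t0 = v0].
Proof.
move=> st0; set T := t0 - s; have T0 : T != 0 by rewrite /T subr_eq0 gt_eqF.
set c2 := (3 * (x0 - xs - vs * T) - (v0 - vs) * T) / T^+2.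
set c3 := ((v0 - vs) * T - 2 * (x0 - xs - vs * T)) / T^+3.
exists (fun t => xs + vs * (t - s) + c2 * (t - s)^+2 + c3 * (t - s)^+3),
       (fun t => vs + 2 * c2 * (t - s) + 3 * c3 * (t - s)^+2),
       (fun t => 2 * c2 + 6 * c3 * (t - s)).
have deta_d (t : R) : is_derive t 1 (fun t => 2 * c2 + 6 * c3 * (t - s)) (6 * c3).
  by apply: is_derive_eq; rewrite -![_ *: _]/(_ * _); ring.
split=> [t|t|t||].
- by apply: is_derive_eq; rewrite -![_ *: _]/(_ * _); ring.
- by apply: is_derive_eq; rewrite -![_ *: _]/(_ * _); ring.
- by case: (deta_d t).
- by rewrite subrr; split; ring.
- by rewrite -/T /c2 /c3; split; field.
Qed.

Lemma bounded_cubic_path {R : realType} {s t0 : R} (xs vs x0 v0 : R) : s < t0 ->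
  exists (xi eta deta : R -> R) (H : R),
    [/\ forall t : R, is_derive t 1 xi (eta t), forall t : R, is_derive t 1 eta (deta t),
        xi s = xs /\ eta s = vs, xi t0 = x0 /\ eta t0 = v0 &
        forall t, s <= t <= t0 -> [/\ `|xi t| <= H, `|eta t| <= H & `|deta t| <= H]].
Proof.
move=> st0; have [xi [eta [deta [xi_d eta_d deta_d ends_s ends_t0]]]] := cubic_path xs vs x0 v0 st0.
have [H1 b1] := derivable_bounded_segment xi s t0 (fun t => ltac:(by case: (xi_d t))).
have [H2 b2] := derivable_bounded_segment eta s t0 (fun t => ltac:(by case: (eta_d t))).
have [H3 b3] := derivable_bounded_segment deta s t0 deta_d.
exists xi, eta, deta, (`|H1| + `|H2| + `|H3|); split=> // t ht.
have := ler_norm H1; have := ler_norm H2; have := ler_norm H3.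
have := normr_ge0 H1; have := normr_ge0 H2; have := normr_ge0 H3.
by have := b1 t ht; have := b2 t ht; have := b3 t ht; split; lra.
Qed.

Lemma integral_eq1_exists_gt0 {d} {T : measurableType d} {R : realType}
    (mu : {measure set T -> \bar R}) (g : T -> R) :
  (forall z, 0 <= g z) -> (\int[mu]_z (g z)%:E = 1)%E -> exists z, 0 < g z.
Proof.
move=> g_ge0 g_mass; apply: contrapT => no_pos.
have g0 : (fun z => (g z)%:E) = (fun=> 0%E).
  apply/funext => z; congr (_%:E); apply/eqP; rewrite eq_le g_ge0 andbT leNgt.
  by apply/negP => gz; apply: no_pos; exists z.
by move: g_mass; rewrite g0 integral0 => -[] /esym/eqP; rewrite oner_eq0.
Qed.

Lemma W2inf_loc_derive1_bounded {R : realType} (V : R -> R) : W2inf_loc V ->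
  forall r : R, exists M, forall x, `|x| <= r -> `|derive1 V x| <= M.
Proof.
move=> [_ V'_lip] r; have [L HL] := V'_lip (- r) r.
exists (`|derive1 V 0| + `|L| * r) => x xr.
have r0 : 0 <= r := le_trans (normr_ge0 x) xr.
have := HL x 0; rewrite subr0 -!ler_norml normr0 => /(_ xr r0) Lip.
have := ler_normD (derive1 V 0) (derive1 V x - derive1 V 0); rewrite addrC subrK => tri.
have : L * `|x| <= `|L| * r.
  by apply: le_trans (ler_norm _) _; rewrite normrM normr_id ler_wpM2l.
lra.
Qed.

Section Bump.
Context {R : realType}.
Variables sigma beta : R.
Implicit Types xi eta deta x v : R.

Definition shear_rate := (4 * sigma * beta)^-1.
Definition shear_weight := 16 * sigma^+2 * beta^+3.

Definition shear xi eta x v := x - xi - shear_rate * (v - eta).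

Definition bump xi eta x v :=
  1 - shear_weight * shear xi eta x v ^+ 2 - beta * (v - eta)^+2.

(* The derivative of [t |-> bump (xi t) (eta t) x v] when [xi' = eta] and
   [eta' = deta]. *)
Definition bump_dpath xi eta deta x v :=
  2 * shear_weight * shear xi eta x v * (eta - shear_rate * deta)
  + 2 * beta * (v - eta) * deta.
Definition bump_dx xi eta x v := - 2 * shear_weight * shear xi eta x v.
Definition bump_dv xi eta x v :=
  2 * shear_weight * shear_rate * shear xi eta x v - 2 * beta * (v - eta).
Definition bump_dvv := - 2 * (shear_weight * shear_rate^+2 + beta).

Lemma bump_center xi eta : bump xi eta xi eta = 1.
Proof. by rewrite /bump /shear !subrr mulr0 subr0 expr0n /= !mulr0 !subr0. Qed.

Lemma shear_weight_ge0 : 0 <= beta -> 0 <= shear_weight.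
Proof. by move=> b0; rewrite /shear_weight mulr_ge0 ?exprn_ge0 // mulr_ge0 ?sqr_ge0. Qed.

Lemma bump_le1 xi eta x v : 0 <= beta -> bump xi eta x v <= 1.
Proof.
move=> b0; rewrite /bump.
have : 0 <= shear_weight * shear xi eta x v ^+ 2.
  by rewrite mulr_ge0 ?sqr_ge0 ?shear_weight_ge0.
have : 0 <= beta * (v - eta)^+2 by rewrite mulr_ge0 ?sqr_ge0.
lra.
Qed.

Lemma bump_pos_near xi eta x v d : 0 < beta -> 1 <= 4 * sigma * beta ->
  1 <= beta * d^+2 -> 0 <= d -> 0 < bump xi eta x v ->
  `|v - eta| < d /\ `|x - xi| < 2 * d.
Proof.
move=> b0 sb bd d0; rewrite /bump.
set u := shear xi eta x v; set w := v - eta => g0.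
have wb : `|w| * `|w| < d * d.
  rewrite -normrM -expr2 ger0_norm ?sqr_ge0 // -expr2.
  have : 0 <= shear_weight * u^+2.
    by rewrite mulr_ge0 ?sqr_ge0 ?shear_weight_ge0 ?ltW.
  nra.
have ub : `|u| * `|u| < d * d.
  rewrite -normrM -expr2 ger0_norm ?sqr_ge0 // -expr2.
  have : beta <= shear_weight.
    have -> : shear_weight = (4 * sigma * beta) * (4 * sigma * beta) * beta.
      by rewrite /shear_weight; ring.
    have : 1 <= (4 * sigma * beta) * (4 * sigma * beta) by nra.
    nra.
  have : 0 <= beta * w^+2 by rewrite mulr_ge0 ?sqr_ge0 // ltW.
  have : 0 <= u^+2 by exact: sqr_ge0.
  nra.
have wd : `|w| < d by have := normr_ge0 w; nra.
have ud : `|u| < d by have := normr_ge0 u; nra.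
have r0 : 0 < shear_rate by rewrite /shear_rate invr_gt0; lra.
have r1 : shear_rate <= 1 by rewrite /shear_rate invr_le1 ?unitfE; lra.
split=> //.
have -> : x - xi = u + shear_rate * w by rewrite /u /w /shear; ring.
apply: le_lt_trans (ler_normD _ _) _; rewrite normrM gtr0_norm //.
have : shear_rate * `|w| <= `|w| by rewrite ler_piMl.
lra.
Qed.

Lemma bump_quadratic_neg (K M2 E g gv : R) : 0 < sigma -> 0 < beta -> 0 < g -> g <= 1 ->
  E^+2 <= M2 -> 12 * sigma * beta + M2 / sigma + 1 <= K ->
  - K * g^+2 + 3 * g * (4 * sigma * beta * g + sigma * gv^+2 - E * gv)
  - 6 * sigma * gv^+2 < 0.
Proof.
move=> s0 b0 g0 g1 EM HK; set D := M2 / sigma.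
have sD : sigma * D = M2 by rewrite /D mulrC divfK // gt_eqF.
have h1 : 3 * sigma * g * gv^+2 <= 3 * sigma * gv^+2.
  have : 0 <= 3 * sigma * gv^+2 * (1 - g).
    by apply: mulr_ge0; [apply: mulr_ge0; [lra | exact: sqr_ge0] | lra].
  lra.
have h2 : - 3 * g * E * gv <= 3 * sigma * gv^+2 + D * g^+2.
  have h3 : E^+2 * g^+2 <= sigma * D * g^+2 by rewrite sD ler_wpM2r ?sqr_ge0.
  have h4 : 0 <= (2 * sigma * gv + E * g)^+2 by exact: sqr_ge0.
  have h5 : 0 <= E^+2 * g^+2 by rewrite mulr_ge0 ?sqr_ge0.
  suff : 0 <= sigma * (3 * sigma * gv^+2 + D * g^+2 + 3 * g * E * gv).
    by rewrite pmulr_rge0 //; lra.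
  have -> : sigma * (3 * sigma * gv^+2 + D * g^+2 + 3 * g * E * gv) =
    (3 * (2 * sigma * gv + E * g)^+2 + (4 * (sigma * D * g^+2) - 3 * (E^+2 * g^+2))) / 4.
    by field.
  by rewrite divr_ge0 //; lra.
have h6 : (12 * sigma * beta + D + 1) * g^+2 <= K * g^+2 by rewrite ler_wpM2r ?sqr_ge0.
have : 0 < g^+2 by rewrite exprn_gt0.
lra.
Qed.

(* For this choice of [shear_rate] and [shear_weight] the left-hand side
   factors as [A * g * Q], with [Q] the quadratic form of the previous lemma
   for [E = deta + a] and [gv = bump_dv]. *)
Lemma bump_strict_subsolution (A K M2 xi eta deta x v a : R) :
  0 < sigma -> 0 < beta -> 0 < A -> 0 < bump xi eta x v ->
  (deta + a)^+2 <= M2 -> 12 * sigma * beta + M2 / sigma + 1 <= K ->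
  let g := bump xi eta x v in
  - K * A * g^+3 + 3 * A * g^+2 * bump_dpath xi eta deta x v
  + v * (3 * A * g^+2 * bump_dx xi eta x v)
  - a * (3 * A * g^+2 * bump_dv xi eta x v)
  - sigma * (3 * A * (2 * g * bump_dv xi eta x v ^+ 2 + g^+2 * bump_dvv)) < 0.
Proof.
move=> s0 b0 A0 g0 EM HK /=; set g := bump xi eta x v.
have Q := bump_quadratic_neg K M2 (deta + a) g (bump_dv xi eta x v) s0 b0 g0
  (bump_le1 xi eta x v (ltW b0)) EM HK.
rewrite -(pmulr_rlt0 _ (mulr_gt0 A0 g0)) in Q; apply: le_lt_trans Q.
rewrite le_eqVlt; apply/orP; left; apply/eqP.
rewrite /g /bump /bump_dpath /bump_dx /bump_dv /bump_dvv /shear /shear_weight /shear_rate.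
by field; rewrite !gt_eqF // !mulr_gt0.
Qed.

End Bump.

Lemma bump_width_exists {R : realType} {sigma dl : R} : 0 < sigma -> 0 < dl ->
  exists beta : R, [/\ 1 <= beta, 1 <= 4 * sigma * beta & 4 <= beta * dl^+2].
Proof.
move=> s0 dl0; exists (1 + 4 / dl^+2 + 1 / sigma).
have dl_term : 0 <= 4 / dl^+2 by rewrite divr_ge0 ?sqr_ge0.
have sigma_term : 0 <= 1 / sigma by rewrite divr_ge0 ?ltW.
split; first lra.
- have -> : 4 * sigma * (1 + 4 / dl^+2 + 1 / sigma) = 4 * (sigma * (1 + 4 / dl^+2)) + 4.
    by field; rewrite !gt_eqF.
  have : 0 <= sigma * (1 + 4 / dl^+2) by rewrite mulr_ge0 ?ltW //; lra.
  lra.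
- have -> : (1 + 4 / dl^+2 + 1 / sigma) * dl^+2 = (1 + 1 / sigma) * dl^+2 + 4.
    by field; rewrite !gt_eqF.
  have : 0 <= (1 + 1 / sigma) * dl^+2 by rewrite mulr_ge0 ?sqr_ge0 //; lra.
  lra.
Qed.

Section Barrier.
Context {R : realType}.
Variables (sigma beta A K s : R) (xi eta deta : R -> R).
Hypothesis xi_derive : forall t : R, is_derive t 1 xi (eta t).
Hypothesis eta_derive : forall t : R, is_derive t 1 eta (deta t).

Definition barrier_amplitude (t : R) := A * expR (- K * (t - s)).
Definition barrier (t x v : R) := barrier_amplitude t * bump sigma beta (xi t) (eta t) x v ^+ 3.

Definition barrier_dt (t x v : R) :=
  - K * barrier t x v + 3 * barrier_amplitude t * bump sigma beta (xi t) (eta t) x v ^+ 2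
                         * bump_dpath sigma beta (xi t) (eta t) (deta t) x v.
Definition barrier_dx (t x v : R) :=
  3 * barrier_amplitude t * bump sigma beta (xi t) (eta t) x v ^+ 2
    * bump_dx sigma beta (xi t) (eta t) x v.
Definition barrier_dv (t x v : R) :=
  3 * barrier_amplitude t * bump sigma beta (xi t) (eta t) x v ^+ 2
    * bump_dv sigma beta (xi t) (eta t) x v.
Definition barrier_dvv (t x v : R) :=
  3 * barrier_amplitude t * (2 * bump sigma beta (xi t) (eta t) x v
                               * bump_dv sigma beta (xi t) (eta t) x v ^+ 2
                             + bump sigma beta (xi t) (eta t) x v ^+ 2 * bump_dvv sigma beta).

Lemma is_derive_barrier_t (t x v : R) : is_derive t 1 (fun r => barrier r x v) (barrier_dt t x v).
Proof.
rewrite /barrier_dt /barrier /barrier_amplitude /bump /bump_dpath /shear.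
by apply: is_derive_eq; rewrite -![_ *: _]/(_ * _); ring.
Qed.

Lemma is_derive_barrier_x (t x v : R) :
  is_derive x 1 (fun y => barrier t y v) (barrier_dx t x v).
Proof.
rewrite /barrier_dx /barrier /bump /bump_dx /shear.
by apply: is_derive_eq; rewrite -![_ *: _]/(_ * _); ring.
Qed.

Lemma is_derive_barrier_v (t x v : R) :
  is_derive v 1 (fun w => barrier t x w) (barrier_dv t x v).
Proof.
rewrite /barrier_dv /barrier /bump /bump_dv /shear.
by apply: is_derive_eq; rewrite -![_ *: _]/(_ * _); ring.
Qed.

Lemma is_derive_barrier_dv (t x v : R) :
  is_derive v 1 (fun w => barrier_dv t x w) (barrier_dvv t x v).
Proof.
rewrite /barrier_dvv /barrier_dv /bump /bump_dv /bump_dvv /shear.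
by apply: is_derive_eq; rewrite -![_ *: _]/(_ * _); ring.
Qed.

Lemma barrier_strict_subsolution (t x v a M2 : R) :
  0 < sigma -> 0 < beta -> 0 < A -> 0 < bump sigma beta (xi t) (eta t) x v ->
  (deta t + a)^+2 <= M2 -> 12 * sigma * beta + M2 / sigma + 1 <= K ->
  barrier_dt t x v + v * barrier_dx t x v - a * barrier_dv t x v
  - sigma * barrier_dvv t x v < 0.
Proof.
move=> s0 b0 A0 g0 EM HK.
have := bump_strict_subsolution sigma beta (barrier_amplitude t) K M2
  (xi t) (eta t) (deta t) x v a s0 b0
  (mulr_gt0 A0 (expR_gt0 _)) g0 EM HK.
by rewrite /= /barrier_dt /barrier !mulrA.
Qed.

Lemma barrier_continuous (p : R * R * R) :
  {for p, continuous (fun q : R * R * R => barrier q.1.1 q.1.2 q.2)}.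
Proof.
have time_cont : {for p, continuous (fun q : R * R * R => q.1.1)}.
  by apply: continuous_comp; [exact: cvg_fst | exact: cvg_fst].
have path_cont (h dh : R -> R) : (forall r : R, is_derive r 1 h (dh r)) ->
    {for p, continuous (fun q : R * R * R => h q.1.1)}.
  move=> hd; apply: continuous_comp time_cont _.
  by apply/differentiable_continuous/derivable1_diffP; case: (hd p.1.1).
rewrite /barrier /barrier_amplitude /bump /shear /shear_weight /shear_rate.
repeat match goal with
  | |- {for _, continuous (fun _ => ?c)} => exact: cst_continuous
  | |- {for _, continuous (fun q => q.1.1)} => exact: time_cont
  | |- {for _, continuous (fun q => q.1.2)} =>
      apply: continuous_comp; [exact: cvg_fst | exact: cvg_snd]
  | |- {for _, continuous (fun q => q.2)} => exact: cvg_snd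
  | |- {for _, continuous (fun q => xi q.1.1)} => exact: path_cont xi_derive
  | |- {for _, continuous (fun q => eta q.1.1)} => exact: path_cont eta_derive
  | |- {for _, continuous (fun q => @?F q ^+ ?n)} =>
      apply: (@continuous_comp _ _ _ F (fun y => y ^+ n)); last exact: exprn_continuous
  | |- {for _, continuous (fun q => expR (@?F q))} =>
      apply: (@continuous_comp _ _ _ F expR); last exact: continuous_expR
  | |- {for _, continuous (fun q => @?F q * @?G q)} => apply: (@continuousM _ _ F G)
  | |- {for _, continuous (fun q => @?F q - @?G q)} => apply: (@continuousB _ _ _ F G)
  | |- {for _, continuous (fun q => @?F q + @?G q)} => apply: (@continuousD _ _ _ F G)
  | |- {for _, continuous (fun q => - @?F q)} => apply: (@continuousN _ _ _ F)
  end.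
Qed.

End Barrier.

Section KineticFokkerPlanck.
Context {R : realType} {nu sigma : R} {V : R -> R} {f : R -> R -> R -> R}.
Hypothesis sigma_gt0 : 0 < sigma.
Hypothesis f_derivable : forall t x v, 0 < t ->
  [/\ derivable (fun s => f s x v) t 1, derivable (fun y => f t y v) x 1,
      derivable (fun w => f t x w) v 1 & derivable (fun w => dv f t x w) v 1].
Hypothesis f_equation : forall t x v, 0 < t ->
  dt f t x v + v * dx f t x v - derive1 V x * dv f t x v
  = nu * dv_vf f t x v + sigma * dvv f t x v.
Hypothesis f_ge0 : forall t x v, 0 < t -> 0 <= f t x v.
Hypothesis f_continuous : cont_pos f.
Hypothesis derive1_V_locally_bounded :
  forall r : R, exists M, forall x, `|x| <= r -> `|derive1 V x| <= M.

Let gap (k : R -> R -> R -> R) t x v := expR (- nu * t) * f t x v - k t x v.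

(* [expR (- nu * t) * f] solves [F_t + v F_x - (V' + nu v) F_v = sigma F_vv], so a
   strict subsolution [k] cannot touch it from below: at a one-sided (in time)
   minimum of the gap, the equation contradicts the first and second order
   conditions. *)
Lemma strict_subsolution_gap_no_min (k : R -> R -> R -> R) (kx kv : R -> R) (kt kvv : R)
    {tm xm vm ta xa xb va vb : R} :
  0 < tm -> ta < tm -> xa < xm < xb -> va < vm < vb ->
  is_derive tm 1 (fun r => k r xm vm) kt ->
  (forall y : R, is_derive y 1 (fun y => k tm y vm) (kx y)) ->
  (forall w : R, is_derive w 1 (fun w => k tm xm w) (kv w)) ->
  is_derive vm 1 kv kvv ->
  kt + vm * kx xm - (derive1 V xm + nu * vm) * kv vm - sigma * kvv < 0 ->
  (forall t, ta < t <= tm -> gap k tm xm vm <= gap k t xm vm) ->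
  (forall y, xa < y < xb -> gap k tm xm vm <= gap k tm y vm) ->
  (forall w, va < w < vb -> gap k tm xm vm <= gap k tm xm w) -> False.
Proof.
move=> tm0 tam xm_in vm_in kt_d kx_d kv_d kvv_d sub t_min x_min v_min.
have [ft fx fv fvv] := f_derivable tm xm vm tm0.
set E := expR (- nu * tm); have E0 : 0 < E by exact: expR_gt0.
have gap_x (y : R) : is_derive y 1 (fun y => gap k tm y vm) (E * dx f tm y vm - kx y).
  have [_ /is_derive_derive1 fd _ _] := f_derivable tm y vm tm0; have kd := kx_d y.
  by rewrite /gap; apply: is_derive_eq.
have crit_x : E * dx f tm xm vm = kx xm.
  apply/eqP; rewrite -subr_eq0; apply/eqP.
  exact: derivative_at_min_eq0 xm_in (fun y _ => gap_x y) x_min.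
pose gv (w : R) := E * dv f tm xm w - kv w.
have gap_v (w : R) : is_derive w 1 (fun w => gap k tm xm w) (gv w).
  have [_ _ /is_derive_derive1 fd _] := f_derivable tm xm w tm0; have kd := kv_d w.
  by rewrite /gap; apply: is_derive_eq.
have crit_v : gv vm = 0 := derivative_at_min_eq0 vm_in (fun w _ => gap_v w) v_min.
have gv_d : is_derive vm 1 gv (E * dvv f tm xm vm - kvv).
  by move/is_derive_derive1: fvv => fvv; rewrite /gv; apply: is_derive_eq.
have convex_v : 0 <= E * dvv f tm xm vm - kvv.
  rewrite -(derive1_val gv_d).
  by apply: (derive1_ge0_at_min vm_in (fun w _ => gap_v w) _ v_min); case: gv_d.
have gap_t : is_derive tm 1 (fun r => gap k r xm vm)
    (- nu * E * f tm xm vm + E * dt f tm xm vm - kt).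
  move/is_derive_derive1: ft => ft; rewrite /gap; apply: is_derive_eq.
  by rewrite -![_ *: _]/(_ * _) /E /dt; ring.
have mono_t : - nu * E * f tm xm vm + E * dt f tm xm vm - kt <= 0.
  rewrite -(derive1_val gap_t); apply: (derive1_le0_at_left_min (tm - ta)).
  - by case: gap_t.
  - lra.
  - by move=> r /andP[r1 r2]; apply: t_min; apply/andP; lra.
have vf : dv_vf f tm xm vm = f tm xm vm + vm * dv f tm xm vm.
  move/is_derive_derive1: fv => fv; apply: derive1_val.
  by apply: is_derive_eq; rewrite -![_ *: _]/(_ * _) /dv; ring.
have eqnE := congr1 (fun z => E * z) (f_equation tm xm vm tm0); rewrite vf /= in eqnE.
have kv_eq : kv vm = E * dv f tm xm vm by move: crit_v; rewrite /gv; lra.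
have diff_v : sigma * kvv <= sigma * (E * dvv f tm xm vm) by rewrite ler_pM2l //; lra.
rewrite -crit_x kv_eq in sub.
lra.
Qed.

Lemma gap_min_on_box (k : R -> R -> R -> R) {s t0 Rx Rv t x v : R} : 0 < s ->
  (forall p, {for p, continuous (fun q : R * R * R => k q.1.1 q.1.2 q.2)}) ->
  s <= t <= t0 -> `|x| <= Rx -> `|v| <= Rv ->
  exists tm xm vm, [/\ s <= tm <= t0, `|xm| <= Rx, `|vm| <= Rv &
    forall r y w, s <= r <= t0 -> `|y| <= Rx -> `|w| <= Rv ->
      gap k tm xm vm <= gap k r y w].
Proof.
move=> s0 k_cont ht hx hv.
pose box := `[s, t0] `*` `[- Rx, Rx] `*` `[- Rv, Rv].
have box_in r y w : s <= r <= t0 -> `|y| <= Rx -> `|w| <= Rv -> ((r, y), w) \in box.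
  by rewrite !ler_norml inE => ? ? ?; split; [split|]; rewrite /= in_itv.
have [[[tm xm] vm] pm_in pm_min] : exists2 pm, pm \in box &
    forall q, q \in box -> gap k pm.1.1 pm.1.2 pm.2 <= gap k q.1.1 q.1.2 q.2.
  apply: compact_EVT_min.
  - by exists ((t, x), v); rewrite -inE; exact: box_in.
  - by apply: compact_setX; [apply: compact_setX|]; exact: segment_compact.
  apply: continuous_in_subspaceT => -[[r y] w].
  rewrite inE => -[[/= + _] _]; rewrite in_itv /= => /andP[sr _].
  rewrite /gap; apply: (@continuousB _ _ _ (fun q : R * R * R =>
    expR (- nu * q.1.1) * f q.1.1 q.1.2 q.2)); last exact: k_cont.
  apply: (@continuousM _ _ (fun q : R * R * R => expR (- nu * q.1.1))).
    apply: (@continuous_comp _ _ _ (fun q : R * R * R => - nu * q.1.1) expR).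
      apply: (@continuousM _ _ (fun=> - nu) (fun q : R * R * R => q.1.1)).
        exact: cst_continuous.
      by apply: continuous_comp; [exact: cvg_fst | exact: cvg_fst].
    exact: continuous_expR.
  by apply: f_continuous; lra.
move: pm_in; rewrite inE /= => -[[/= +] +]; rewrite !in_itv /= -!ler_norml.
move=> tm_in xm_le vm_le; exists tm, xm, vm; split=> // r y w hr hy hw.
exact: (pm_min ((r, y), w) (box_in r y w hr hy hw)).
Qed.

Lemma barrier_below_solution (beta A K s t0 Rx Rv M2 : R) (xi eta deta : R -> R) :
  0 < s -> 1 <= beta -> 1 <= 4 * sigma * beta -> 0 < A ->
  12 * sigma * beta + M2 / sigma + 1 <= K ->
  (forall t : R, is_derive t 1 xi (eta t)) -> (forall t : R, is_derive t 1 eta (deta t)) ->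
  (forall t, s <= t <= t0 -> `|xi t| + 2 < Rx /\ `|eta t| + 1 < Rv) ->
  (forall t x v, s <= t <= t0 -> `|x| <= Rx -> `|v| <= Rv ->
     (deta t + (derive1 V x + nu * v))^+2 <= M2) ->
  (forall x v, barrier sigma beta A K s xi eta s x v <= expR (- nu * s) * f s x v) ->
  forall t x v, s <= t <= t0 -> `|x| <= Rx -> `|v| <= Rv ->
    barrier sigma beta A K s xi eta t x v <= expR (- nu * t) * f t x v.
Proof.
move=> s0 b1 sb A0 HK xi_d eta_d path_in drift init t x v ht hx hv.
pose k := barrier sigma beta A K s xi eta.
have [tm [xm [vm [tm_in xm_le vm_le pm_min]]]] :=
  gap_min_on_box k s0 (barrier_continuous sigma beta A K s xi eta deta xi_d eta_d) ht hx hv.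
suff gap_ge0 : 0 <= gap k tm xm vm.
  by have := pm_min t x v ht hx hv; move: gap_ge0; rewrite /gap /k /=; lra.
rewrite leNgt; apply/negP => gap_neg.
have [s_le_tm tm_le_t0] := andP tm_in.
have tm0 : 0 < tm by lra.
have g0 : 0 < bump sigma beta (xi tm) (eta tm) xm vm.
  rewrite -(exprn_odd_gt0 _ (isT : odd 3)).
  rewrite -(pmulr_rgt0 _ (mulr_gt0 A0 (expR_gt0 (- K * (tm - s))))).
  have := f_ge0 tm xm vm tm0; have := expR_gt0 (- nu * tm).
  move: gap_neg; rewrite /gap /k /barrier /barrier_amplitude; nra.
have b0 : 0 < beta := lt_le_trans ltr01 b1.
have [vm_near xm_near] := bump_pos_near _ _ _ _ _ _ 1 b0 sb
  ltac:(by rewrite expr1n mulr1) ler01 g0.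
have [xi_in eta_in] := path_in tm tm_in.
have xm_int : - Rx < xm < Rx.
  rewrite -ltr_norml; have := ler_normD (xm - xi tm) (xi tm); rewrite subrK; lra.
have vm_int : - Rv < vm < Rv.
  rewrite -ltr_norml; have := ler_normD (vm - eta tm) (eta tm); rewrite subrK; lra.
have s_tm : s < tm.
  rewrite lt_neqAle s_le_tm andbT; apply/eqP => ets.
  by move: gap_neg; rewrite /gap /k -ets; have := init xm vm; lra.
apply: (strict_subsolution_gap_no_min k
  (fun y => barrier_dx sigma beta A K s xi eta tm y vm)
  (fun w => barrier_dv sigma beta A K s xi eta tm xm w)
  (barrier_dt sigma beta A K s xi eta deta tm xm vm)
  (barrier_dvv sigma beta A K s xi eta tm xm vm) tm0 s_tm xm_int vm_int).
- exact: is_derive_barrier_t.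
- by move=> y; exact: is_derive_barrier_x.
- by move=> w; exact: is_derive_barrier_v.
- exact: is_derive_barrier_dv.
- apply: (@barrier_strict_subsolution R sigma beta A K s xi eta deta tm xm vm _ M2
    sigma_gt0 b0 A0 g0 _ HK).
  exact: drift.
- move=> r /andP[sr rt]; apply: pm_min => //.
  by rewrite (ltW sr) (le_trans rt).
- by move=> y /andP[y1 y2]; apply: pm_min => //; rewrite ler_norml !ltW.
- by move=> w /andP[w1 w2]; apply: pm_min => //; rewrite ler_norml !ltW.
Qed.

Lemma continuous_positive_box {s xs vs : R} : 0 < s -> 0 < f s xs vs ->
  exists c dl : R, [/\ 0 < c, 0 < dl &
    forall x v, `|x - xs| < dl -> `|v - vs| < dl -> c < f s x v].
Proof.
move=> s0 fpos; exists (f s xs vs / 2).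
have /nbhs_ballP[r r0 ball_pos] :=
  cvgr_gt _ (f_continuous s xs vs s0) (f s xs vs / 2) ltac:(rewrite ltr_pdivrMr //; lra).
exists r; split=> // [|x v hx hv]; first by rewrite divr_gt0.
apply: (ball_pos ((s, x), v)).
by split; [split; [exact: ballxx |] |]; rewrite /ball /= distrC.
Qed.

Lemma barrier_initially_below (beta K s c dl xs vs : R) (xi eta : R -> R) :
  0 < s -> 0 < c -> 0 < beta -> 1 <= 4 * sigma * beta -> 4 <= beta * dl^+2 -> 0 < dl ->
  (forall x v, `|x - xs| < dl -> `|v - vs| < dl -> c < f s x v) ->
  xi s = xs -> eta s = vs ->
  forall x v, barrier sigma beta (expR (- nu * s) * c) K s xi eta s x v
              <= expR (- nu * s) * f s x v.
Proof.
move=> s0 c0 b0 sb bdl dl0 f_pos xi_s eta_s x v.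
have E0 : 0 < expR (- nu * s) := expR_gt0 _.
have A0 : 0 < expR (- nu * s) * c := mulr_gt0 E0 c0.
rewrite /barrier /barrier_amplitude subrr mulr0 expR0 mulr1 xi_s eta_s.
have [g_le0 | g0] := leP (bump sigma beta xs vs x v) 0.
  have : bump sigma beta xs vs x v ^+ 3 <= 0 by rewrite exprn_odd_le0.
  have := f_ge0 s x v s0; nra.
have bdl2 : 1 <= beta * (dl / 2)^+2.
  by rewrite (_ : beta * _ = beta * dl^+2 / 4); [rewrite ler_pdivlMr // mul1r | field].
have [v_near x_near] := bump_pos_near _ _ _ _ _ _ (dl / 2) b0 sb bdl2 ltac:(lra) g0.
have fc := f_pos x v ltac:(lra) ltac:(lra).
have : bump sigma beta xs vs x v ^+ 3 <= 1.
  by apply: exprn_ile1; [exact: ltW | exact: bump_le1 (ltW b0)].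
nra.
Qed.

Lemma positive_of_positive_box {s t0 xs vs c dl : R} :
  0 < s -> s < t0 -> 0 < c -> 0 < dl ->
  (forall x v, `|x - xs| < dl -> `|v - vs| < dl -> c < f s x v) ->
  forall x0 v0, 0 < f t0 x0 v0.
Proof.
move=> s0 st0 c0 dl0 f_pos x0 v0.
have [xi [eta [deta [H [xi_d eta_d [xi_s eta_s] [xi_t0 eta_t0] path_bounded]]]]] :=
  bounded_cubic_path xs vs x0 v0 st0.
have [beta [b1 sb bdl]] := bump_width_exists sigma_gt0 dl0.
set Rx := H + 3; set Rv := H + 2.
have [MV MV_bound] := derive1_V_locally_bounded Rx.
set M := H + MV + `|nu| * Rv.
have path_in t : s <= t <= t0 -> `|xi t| + 2 < Rx /\ `|eta t| + 1 < Rv.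
  by case/path_bounded => *; rewrite /Rx /Rv; split; lra.
have drift t x v : s <= t <= t0 -> `|x| <= Rx -> `|v| <= Rv ->
    (deta t + (derive1 V x + nu * v))^+2 <= M^+2.
  move=> /path_bounded[_ _ dH] /MV_bound Vx vR.
  set E := deta t + _; have EM : `|E| <= M.
    apply: le_trans (ler_normD _ _) _; rewrite /M -addrA lerD //.
    by apply: le_trans (ler_normD _ _) _; rewrite lerD // normrM ler_wpM2l.
  by rewrite -real_normK ?num_real //; have := normr_ge0 E; nra.
set K := 12 * sigma * beta + M^+2 / sigma + 1; set A := expR (- nu * s) * c.
have A0 : 0 < A by rewrite mulr_gt0 ?expR_gt0.
have below := barrier_below_solution beta A K s t0 Rx Rv (M^+2) xi eta deta
  s0 b1 sb A0 (lexx K) xi_d eta_d path_in drift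
  (barrier_initially_below beta K s c dl xs vs xi eta s0 c0 (lt_le_trans ltr01 b1) sb bdl dl0
     f_pos xi_s eta_s).
have [xH vH _] := path_bounded t0 ltac:(rewrite lexx andbT; exact: ltW).
have := below t0 (xi t0) (eta t0) ltac:(by rewrite lexx ltW) ltac:(rewrite /Rx; lra)
  ltac:(rewrite /Rv; lra).
rewrite /barrier bump_center expr1n mulr1 xi_t0 eta_t0 => at_target.
rewrite -(pmulr_rgt0 _ (expR_gt0 (- nu * t0))); apply: lt_le_trans at_target.
by rewrite /barrier_amplitude !mulr_gt0 ?expR_gt0.
Qed.

End KineticFokkerPlanck.

Theorem proposition7p1 (R : realType) (nu sigma : R) (V : R -> R)
    (f0 : R * R -> R) (f : R -> R -> R -> R) :
  0 < nu -> 0 < sigma ->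
  W2inf_loc V ->
  V x @[x --> +oo] --> +oo ->
  V x @[x --> -oo] --> +oo ->
  (@leb2 R).-integrable setT (fun z => (f0 z)%:E) ->
  (forall z, 0 <= f0 z) ->
  (\int[@leb2 R]_z (f0 z)%:E = 1)%E ->
  kfp_solution nu sigma V f0 f ->
  forall t x v, 0 < t -> 0 < f t x v.
Proof.
move=> _ sigma_gt0 /W2inf_loc_derive1_bounded V'_bounded _ _ _ _ _.
move=> [f_der [f_cont [_ [_ [_ [_ [f_eq [f_ge0 [f_mass _]]]]]]]]] t x v t0.
have s0 : 0 < t / 2 by rewrite divr_gt0.
have [[xs vs] /= f_pos] := integral_eq1_exists_gt0 (@leb2 R)
  (fun z : R * R => f (t / 2) z.1 z.2) (fun z => f_ge0 _ z.1 z.2 s0) (f_mass _ s0).2.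
have [c [dl [c0 dl0 box]]] := continuous_positive_box f_cont s0 f_pos.
apply: (positive_of_positive_box sigma_gt0 f_der f_eq f_ge0 f_cont V'_bounded s0 _ c0 dl0 box).
rewrite ltr_pdivrMr //; lra.
Qed.
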